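(* Let $a\in[0,4)$. Then for every $s\in Q_a$, $\lim_{n\to\infty}W^n(s)=(0,0,0,0)$.
   Context: $W:\mathbb{R}^4\to\mathbb{R}^4$ is the map $W(x,y,u,v)=(x',y',u',v')$ with $x'=\tfrac12 xu+\tfrac14 yu$, $y'=\tfrac12 xv+\tfrac14 yu+\tfrac13 yv$, $u'=\tfrac12 xu+\tfrac12 xv+\tfrac14 yu+\tfrac13 yv$, $v'=\tfrac14 yu+\tfrac13 yv$. $W^n$ denotes the $n$-fold iterate. $P=\{(x,y,u,v): x,y,u,v\ge0\}$ and $Q_a=\{(x,y,u,v)\in P: x+y+u+v\le a\}$. *)

From Stdlib Require Import Reals.
Open Scope R_scope.

Record R4 := mkR4 { cx : R; cy : R; cu : R; cv : R }.

Definition W (s : R4) : R4 :=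
  let x := cx s in let y := cy s in let u := cu s in let v := cv s in
  mkR4 (1/2 * x * u + 1/4 * y * u)
       (1/2 * x * v + 1/4 * y * u + 1/3 * y * v)
       (1/2 * x * u + 1/2 * x * v + 1/4 * y * u + 1/3 * y * v)
       (1/4 * y * u + 1/3 * y * v).

Fixpoint Wn (n : nat) (s : R4) : R4 :=
  match n with O => s | S k => W (Wn k s) end.

Definition in_P (s : R4) : Prop :=
  0 <= cx s /\ 0 <= cy s /\ 0 <= cu s /\ 0 <= cv s.

Definition in_Q (a : R) (s : R4) : Prop :=
  in_P s /\ cx s + cy s + cu s + cv s <= a.

Definition R4_cv (f : nat -> R4) (l : R4) : Prop :=
  Un_cv (fun n => cx (f n)) (cx l) /\ Un_cv (fun n => cy (f n)) (cy l) /\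
  Un_cv (fun n => cu (f n)) (cu l) /\ Un_cv (fun n => cv (f n)) (cv l).

From Stdlib Require Import Reals Lra Psatz.
Open Scope R_scope.

(* The total mass m = x + y + u + v of a point of P is mapped to (x + y)(u + v) <= m^2 / 4,
   so while m < 4 it contracts at least geometrically with ratio m / 4; every coordinate
   is squeezed between 0 and the mass. *)

Lemma Un_cv_squeeze_0 (f g : nat -> R) :
  (forall n, 0 <= f n <= g n) -> Un_cv g 0 -> Un_cv f 0.
Proof.
  intros Hfg Hg eps Heps.
  destruct (Hg eps Heps) as [N HN].
  exists N; intros n Hn.
  specialize (HN n Hn); specialize (Hfg n).
  unfold R_dist in *; rewrite Rminus_0_r in *.
  rewrite Rabs_right in * by lra.
  lra.
Qed.

Lemma Un_cv_scal_pow_0 (c q : R) : Rabs q < 1 -> Un_cv (fun n => c * q ^ n) 0.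
Proof.
  intros Hq.
  rewrite <- (Rmult_0_r c).
  apply CV_mult.
  - intros eps Heps; exists 0%nat; intros n _.
    unfold R_dist; rewrite Rminus_diag, Rabs_R0; exact Heps.
  - intros eps Heps.
    destruct (pow_lt_1_zero q Hq eps Heps) as [N HN].
    exists N; intros n Hn.
    unfold R_dist; rewrite Rminus_0_r; exact (HN n Hn).
Qed.

Definition mass (s : R4) : R := cx s + cy s + cu s + cv s.

Lemma mass_W (s : R4) : mass (W s) = (cx s + cy s) * (cu s + cv s).
Proof. unfold mass, W; simpl; field. Qed.

Lemma mass_W_le (s : R4) : mass (W s) <= mass s ^ 2 / 4.
Proof.
  rewrite mass_W; unfold mass.
  pose proof (pow2_ge_0 (cx s + cy s - (cu s + cv s))).
  nra.
Qed.

Lemma W_in_P (s : R4) : in_P s -> in_P (W s).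
Proof.
  unfold in_P, W; simpl; intros [hx [hy [hu hv]]].
  repeat split; nra.
Qed.

Lemma Wn_in_P (n : nat) (s : R4) : in_P s -> in_P (Wn n s).
Proof.
  intros hs; induction n as [|n IH]; simpl; [exact hs | exact (W_in_P _ IH)].
Qed.

Lemma mass_nonneg (s : R4) : in_P s -> 0 <= mass s.
Proof. unfold in_P, mass; lra. Qed.

Lemma mass_Wn_le (n : nat) (s : R4) :
  in_P s -> mass s <= 4 -> mass (Wn n s) <= mass s * (mass s / 4) ^ n.
Proof.
  intros hs hm.
  set (m := mass s) in *.
  assert (hm0 : 0 <= m) by exact (mass_nonneg s hs).
  induction n as [|n IH]; simpl.
  - rewrite Rmult_1_r; apply Rle_refl.
  - set (t := Wn n s) in *.
    assert (ht0 : 0 <= mass t) by exact (mass_nonneg t (Wn_in_P n s hs)).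
    assert (hq0 : 0 <= (m / 4) ^ n) by (apply pow_le; lra).
    assert (hq1 : (m / 4) ^ n <= 1) by (rewrite <- (pow1 n); apply pow_incr; lra).
    assert (hsq : mass t ^ 2 <= (m * (m / 4) ^ n) ^ 2) by (apply pow_incr; lra).
    assert (hshrink : m * (m / 4) ^ n <= m)
      by (pose proof (Rmult_le_compat_l m _ _ hm0 hq1); lra).
    assert (0 <= m * (m / 4) ^ n) by (apply Rmult_le_pos; lra).
    pose proof (mass_W_le t).
    nra.
Qed.

Lemma coord_Wn_cv_0 (coord : R4 -> R) (s : R4) :
  (forall t, in_P t -> 0 <= coord t <= mass t) ->
  in_P s -> mass s < 4 -> Un_cv (fun n => coord (Wn n s)) 0.
Proof.
  intros hcoord hs hm.
  apply (Un_cv_squeeze_0 _ (fun n => mass s * (mass s / 4) ^ n)).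
  - intros n.
    pose proof (hcoord _ (Wn_in_P n s hs)).
    pose proof (mass_Wn_le n s hs (Rlt_le _ _ hm)).
    lra.
  - apply Un_cv_scal_pow_0.
    pose proof (mass_nonneg s hs).
    rewrite Rabs_right; lra.
Qed.

Theorem lemma3p2 (a : R) (ha0 : 0 <= a) (ha4 : a < 4) (s : R4) (hs : in_Q a s) :
  R4_cv (fun n => Wn n s) (mkR4 0 0 0 0).
Proof.
  destruct hs as [hP hsum].
  assert (hm : mass s < 4) by (unfold mass; lra).
  unfold R4_cv; simpl.
  repeat split; apply coord_Wn_cv_0; auto;
    intros t [hx [hy [hu hv]]]; unfold mass; lra.
Qed.
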